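(* Let $F:\mathbb{R}^d\to\mathbb{R}^d$ be smooth and consider $\dot{x}=F(x)$. Let $\Psi:\mathbb{R}^d\times\mathbb{R}^d\to\mathbb{R}^d$ be smooth and satisfy the consistency conditions $$\Psi(x,x)=F(x),\qquad F'(x)=\Psi_1(x,x)+\Psi_2(x,x)\quad\text{for all }x.$$ Here $\Psi_1,\Psi_2$ are the $d\times d$ Jacobian matrices of $\Psi$ with respect to its first and second vector argument. Write $\bar\Psi_2=\Psi_2(\bar x,\bar x)$. Consider the scheme $x_{n+1}-x_n=\delta(\bar x)\,\Psi(x_n,x_{n+1})$ with $$\delta(\bar x)=\big(e^{h_nF'(\bar x)}-1\big)\Big(F'(\bar x)+\bar\Psi_2\big(e^{h_nF'(\bar x)}-1\big)\Big)^{-1}.$$ This scheme is locally exact at $\bar x$.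
   Context: $F'(x)$ denotes the Jacobian matrix of $F$, assumed invertible at $\bar x$, and $1$ denotes the identity matrix. The linearization of $\dot{x}=F(x)$ around $\bar x$ is $\dot\xi=F'(\bar x)\xi+F(\bar x)$ with $\xi=x-\bar x$. Its exact discretization with time step $h_n$ is $$\xi_{n+1}=e^{h_nF'(\bar x)}\xi_n+\big(e^{h_nF'(\bar x)}-1\big)F'(\bar x)^{-1}F(\bar x).$$ The linearization of the scheme at $\bar x$ is obtained as follows: - substitute $x_n=\bar x+\xi_n$ and $x_{n+1}=\bar x+\xi_{n+1}$; - keep the matrix $\delta(\bar x)$ (which depends only on $\bar x$ and $h_n$) fixed; - keep only terms up to first order in $\xi_n,\xi_{n+1}$. The scheme is locally exact at $\bar x$ if this linear relation is identical with the exact discretization above, as a relation determining $\xi_{n+1}$ from $\xi_n$. *)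

From HB Require Import structures.
From mathcomp Require Import all_boot all_order all_algebra.
From mathcomp Require Import all_classical all_reals all_analysis.
Set Implicit Arguments. Unset Strict Implicit. Unset Printing Implicit Defensive.
Import Order.TTheory GRing.Theory Num.Theory.
Import numFieldNormedType.Exports.
Local Open Scope ring_scope.
Local Open Scope classical_set_scope.

Definition jac (R : realType) (d e : nat) (f : 'cV[R]_d -> 'cV[R]_e) (x : 'cV[R]_d)
  : 'M[R]_(e, d) :=
  \matrix_(i < e, j < d) ('d f x (delta_mx j 0)) i 0.

Definition jac1 (R : realType) (d : nat) (Psi : 'cV[R]_d -> 'cV[R]_d -> 'cV[R]_d)
  (x y : 'cV[R]_d) : 'M[R]_d := jac (fun u => Psi u y) x.
Definition jac2 (R : realType) (d : nat) (Psi : 'cV[R]_d -> 'cV[R]_d -> 'cV[R]_d)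
  (x y : 'cV[R]_d) : 'M[R]_d := jac (fun v => Psi x v) y.

Definition expmx (R : realType) (d : nat) (A : 'M[R]_d) : 'M[R]_d :=
  lim (series (fun k : nat => (k`!%:R)^-1 *: A ^+ k) @ \oo).

Definition delta_mx_scheme (R : realType) (d : nat) (F : 'cV[R]_d -> 'cV[R]_d)
  (Psi : 'cV[R]_d -> 'cV[R]_d -> 'cV[R]_d) (h : R) (xbar : 'cV[R]_d) : 'M[R]_d :=
  let A := jac F xbar in
  let E := expmx (h *: A) - 1%:M in
  E *m invmx (A + jac2 Psi xbar xbar *m E).

(* Linearization at xbar of the scheme  x_{n+1} - x_n = delta Psi(x_n, x_{n+1}),
   with delta kept fixed, x_n = xbar + xi0, x_{n+1} = xbar + xi1, first order. *)
Definition linearized_scheme (R : realType) (d : nat)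
  (Psi : 'cV[R]_d -> 'cV[R]_d -> 'cV[R]_d) (delta : 'M[R]_d) (xbar xi0 xi1 : 'cV[R]_d)
  : Prop :=
  xi1 - xi0 = delta *m (Psi xbar xbar + jac1 Psi xbar xbar *m xi0
                                       + jac2 Psi xbar xbar *m xi1).

(* Exact discretization with step h of the linearization of x' = F(x) at xbar. *)
Definition exact_discretization (R : realType) (d : nat) (F : 'cV[R]_d -> 'cV[R]_d)
  (h : R) (xbar xi0 xi1 : 'cV[R]_d) : Prop :=
  let A := jac F xbar in
  xi1 = expmx (h *: A) *m xi0 + (expmx (h *: A) - 1%:M) *m invmx A *m F xbar.

Definition locally_exact (R : realType) (d : nat) (F : 'cV[R]_d -> 'cV[R]_d)
  (Psi : 'cV[R]_d -> 'cV[R]_d -> 'cV[R]_d) (delta : 'M[R]_d) (h : R) (xbar : 'cV[R]_d)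
  : Prop :=
  forall xi0 xi1 : 'cV[R]_d,
    linearized_scheme Psi delta xbar xi0 xi1 <-> exact_discretization F h xbar xi0 xi1.

From HB Require Import structures.
From mathcomp Require Import all_boot all_order all_algebra.
From mathcomp Require Import all_classical all_reals all_analysis.
Import Order.TTheory GRing.Theory Num.Theory.
Import numFieldNormedType.Exports.
Local Open Scope ring_scope.

(* Write A = F'(xbar), E = e^{hA} - 1 and Psi1bar = A - Psi2bar (consistency).
   With u = xi1 - xi0 the linearized scheme reads
   u = E (A + Psi2bar E)^-1 (F(xbar) + A xi0 + Psi2bar u). Putting
   v = (A + Psi2bar E)^-1 (...), the equation u = E v is equivalent to A v = F(xbar) + A xi0,
   i.e. u = E A^-1 F(xbar) + E xi0, which is the exact discretization. *)

Section SchemeAlgebra.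

Variables (R : comUnitRingType) (n m k : nat).

Lemma mulmx_invmx_fixpointP (A : 'M[R]_n) (P : 'M[R]_(n, m)) (E : 'M[R]_(m, n))
    (w : 'M[R]_(n, k)) (u : 'M[R]_(m, k)) :
  A \in unitmx -> A + P *m E \in unitmx ->
  u = E *m invmx (A + P *m E) *m (w + P *m u) <-> u = E *m invmx A *m w.
Proof.
move=> uA uM; split=> [u_def | ->].
- set v := invmx (A + P *m E) *m (w + P *m u).
  have u_Ev : u = E *m v by rewrite /v mulmxA.
  have Av : A *m v = w.
    have : (A + P *m E) *m v = w + P *m u by rewrite /v mulKVmx.
    by rewrite mulmxDl -mulmxA -u_Ev => /addIr.
  by rewrite u_Ev -Av -mulmxA mulKmx.
- have -> : w + P *m (E *m invmx A *m w) = (A + P *m E) *m (invmx A *m w).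
    by rewrite mulmxDl mulKVmx // !mulmxA.
  by rewrite !mulmxA mulmxKV.
Qed.

End SchemeAlgebra.

Lemma linearized_scheme_mx_eq_exact (R : comUnitRingType) (d : nat)
    (A P1 P2 X : 'M[R]_d) (f xi0 xi1 : 'cV[R]_d) :
  A = P1 + P2 -> A \in unitmx -> A + P2 *m (X - 1%:M) \in unitmx ->
  xi1 - xi0 = (X - 1%:M) *m invmx (A + P2 *m (X - 1%:M)) *m (f + P1 *m xi0 + P2 *m xi1)
  <-> xi1 = X *m xi0 + (X - 1%:M) *m invmx A *m f.
Proof.
move=> A_def uA uM; set E := X - 1%:M.
have -> : f + P1 *m xi0 + P2 *m xi1 = (f + A *m xi0) + P2 *m (xi1 - xi0).
  by rewrite A_def mulmxDl mulmxBr -!addrA [P2 *m xi0 + _]addrC subrK.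
rewrite mulmx_invmx_fixpointP //.
have -> : E *m invmx A *m (f + A *m xi0) = E *m invmx A *m f + E *m xi0.
  by rewrite mulmxDr -(mulmxA _ (invmx A) (A *m xi0)) mulKmx.
have -> : X *m xi0 = E *m xi0 + xi0 by rewrite mulmxBl mul1mx subrK.
by rewrite (addrC (E *m xi0 + xi0)) addrA; split=> [<- | ->]; [by rewrite subrK | exact: addrK].
Qed.

Theorem proposition4p3 (R : realType) (d : nat)
  (F : 'cV[R]_d -> 'cV[R]_d) (Psi : 'cV[R]_d -> 'cV[R]_d -> 'cV[R]_d)
  (h : R) (xbar : 'cV[R]_d) :
  (forall x, differentiable F x) ->
  (forall x y, differentiable (fun u => Psi u y) x) ->
  (forall x y, differentiable (fun v => Psi x v) y) ->
  (forall x, Psi x x = F x) ->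
  (forall x, jac F x = jac1 Psi x x + jac2 Psi x x) ->
  0 < h ->
  jac F xbar \in unitmx ->
  jac F xbar + jac2 Psi xbar xbar *m (expmx (h *: jac F xbar) - 1%:M) \in unitmx ->
  locally_exact F Psi (delta_mx_scheme F Psi h xbar) h xbar.
Proof.
move=> _ _ _ Psi_diag jacF_split _ uA uM xi0 xi1.
rewrite /linearized_scheme /exact_discretization /delta_mx_scheme Psi_diag.
exact: linearized_scheme_mx_eq_exact.
Qed.
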